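(* Let $M=(S,\mathrm{Act},P)$ be an MDP, $T\subseteq S$, $\mathrm{opt}\in\{\min,\max\}$, and let $r$ be the least fixed point of the complementary distance operator $\tilde D^{\mathrm{opt}}$ (w.r.t. the pointwise order on $\mathbb{N}_\infty^S$). Then for all $s\in S$: $r(s)=\infty$ if and only if $\Pr^{\mathrm{opt}}_s(\Diamond T)=1$.
   Context: An MDP is a tuple $M=(S,\mathrm{Act},P)$ with $S$ finite, $\mathrm{Act}$ finite, $P\colon S\times\mathrm{Act}\times S\to[0,1]$ with $\sum_{s'}P(s,a,s')\in\{0,1\}$; $\mathrm{Act}(s)=\{a\mid\sum_{s'}P(s,a,s')=1\}$ is nonempty for all $s$; $\mathrm{Post}(s,a)=\{s'\mid P(s,a,s')>0\}$. A strategy is $\sigma\colon S\to\mathrm{Act}$ with $\sigma(s)\in\mathrm{Act}(s)$, inducing a Markov chain with transitions $P(s,\sigma(s),\cdot)$; $\Pr^\sigma_s(\Diamond T)$ is the probability of visiting $T$ from $s$ and $\Pr^{\mathrm{opt}}_s(\Diamond T)=\mathrm{opt}_\sigma\Pr^\sigma_s(\Diamond T)$. $\mathbb{N}_\infty=\mathbb{N}\cup\{\infty\}$ with $\infty+1=\infty$. The complementary distance operator $\tilde D^{\mathrm{opt}}\colon\mathbb{N}_\infty^S\to\mathbb{N}_\infty^S$ is $\tilde D^{\mathrm{opt}}(r)(s)=\infty$ if $s\in T$, and for $s\notin T$: $\tilde D^{\mathrm{opt}}(r)(s)=\mathrm{opt}_{a\in\mathrm{Act}(s)}\big(\min_{s'\in\mathrm{Post}(s,a)}r(s')+[\exists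 u,v\in\mathrm{Post}(s,a)\colon r(u)\neq r(v)]\big)$, where $[\varphi]$ is $1$ if $\varphi$ holds and $0$ otherwise. This operator is monotone, so its least fixed point exists. *)

From HB Require Import structures.
From mathcomp Require Import all_boot all_order all_algebra.
From mathcomp Require Import boolp classical_sets reals.
Set Implicit Arguments. Unset Strict Implicit. Unset Printing Implicit Defensive.
Import Order.TTheory GRing.Theory Num.Theory.
Local Open Scope ring_scope.
Local Open Scope classical_set_scope.

Section MDP.
Variables (R : realType) (S Act : finType) (P : S -> Act -> S -> R).

Definition enabled (s : S) : {set Act} := [set a | \sum_(s' : S) P s a s' == 1].
Definition Post (s : S) (a : Act) : {set S} := [set s' | 0 < P s a s'].

Definition is_MDP : Prop :=
  [/\ forall s a s', 0 <= P s a s' <= 1,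
      forall s a, \sum_(s' : S) P s a s' = 0 \/ \sum_(s' : S) P s a s' = 1
    & forall s, exists a, a \in enabled s].

(* (memoryless deterministic) strategies sigma : S -> Act with sigma(s) in Act(s) *)
Definition strategy (sigma : S -> Act) : Prop := forall s, sigma s \in enabled s.

Fixpoint reach_within (T : {set S}) (sigma : S -> Act) (n : nat) (s : S) : R :=
  if s \in T then 1 else
  match n with
  | 0 => 0
  | n'.+1 => \sum_(s' : S) P s (sigma s) s' * reach_within T sigma n' s'
  end.

(* Pr^sigma_s(<> T) : probability of the event "eventually T", i.e. the
   measure of the increasing union of the events "T within n steps". *)
Definition Pr_reach (T : {set S}) (sigma : S -> Act) (s : S) : R :=
  sup (range (fun n : nat => reach_within T sigma n s)).

Inductive opt_kind := Omin | Omax.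

Definition Pr_opt (o : opt_kind) (T : {set S}) (s : S) : R :=
  let vals := [set Pr_reach T sigma s | sigma in strategy] in
  match o with Omin => inf vals | Omax => sup vals end.

End MDP.

(* ---------- N_infty = nat + {infinity}; None represents infinity ---------- *)
Definition ninf := option nat.
Definition ninf_le (x y : ninf) : bool :=
  match x, y with
  | _, None => true
  | None, Some _ => false
  | Some m, Some n => (m <= n)%N
  end.
Definition ninf_min (x y : ninf) : ninf := if ninf_le x y then x else y.
Definition ninf_max (x y : ninf) : ninf := if ninf_le x y then y else x.
Definition ninf_addb (x : ninf) (b : bool) : ninf :=
  if b then omap succn x else x.

Section Operator.
Variables (R : realType) (S Act : finType) (P : S -> Act -> S -> R).

(* complementary distance operator \tilde D^opt.  Big min uses the top element
   (infinity) as unit and big max the bottom element 0 as unit; the ranges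
   Post(s,a) and Act(s) are nonempty in an MDP. *)
Definition Dtilde (o : opt_kind) (T : {set S}) (r : S -> ninf) (s : S) : ninf :=
  if s \in T then None else
  let val a :=
    ninf_addb (\big[ninf_min/None]_(s' in Post P s a) r s')
              [exists u in Post P s a, exists v in Post P s a, r u != r v] in
  match o with
  | Omin => \big[ninf_min/None]_(a in enabled P s) val a
  | Omax => \big[ninf_max/Some 0%N]_(a in enabled P s) val a
  end.

Definition is_lfp (F : (S -> ninf) -> (S -> ninf)) (r : S -> ninf) : Prop :=
  (forall s, F r s = r s) /\
  (forall r', (forall s, F r' s = r' s) -> forall s, ninf_le (r s) (r' s)).

End Operator.

From HB Require Import structures.
From mathcomp Require Import all_boot all_order all_algebra.
From mathcomp Require Import boolp classical_sets reals.
From mathcomp Require Import lra.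
Set Implicit Arguments. Unset Strict Implicit. Unset Printing Implicit Defensive.
Import Order.TTheory GRing.Theory Num.Theory.
Local Open Scope ring_scope.

(* Let q > 0 bound all positive transition probabilities from below
   ([prob_lb]).  If r(s) = k is finite, follow an action realising r at every
   state (any action for max, a minimising one for min): each step either
   moves, with probability at least q, to a successor of smaller r, or keeps
   r constant on all successors.  Induction on the horizon then bounds the
   probability of reaching T from s by 1 - q^k.

   Conversely, minimality of r forces every state with r = oo to reach T
   inside {r = oo} along suitable moves: for min along any strategy, since
   {r = oo} is closed under all actions, and for max along actions all of
   whose successors have r = oo.  Otherwise, lowering r to a large finite
   value on the states that cannot reach T would produce a smaller prefixed
   point of the operator.  As every state with r = oo is then within N such
   moves of T, the probability of not having reached T shrinks by a factor
   1 - q^N every N steps, hence is 0 in the limit. *)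

Lemma ninf_le_refl x : ninf_le x x.
Proof. by case: x => /=. Qed.

Lemma ninf_le_trans y x z : ninf_le x y -> ninf_le y z -> ninf_le x z.
Proof. by case: x y z => [a|] [b|] [c|] //=; apply: leq_trans. Qed.

Lemma ninf_le_anti x y : ninf_le x y -> ninf_le y x -> x = y.
Proof. by case: x y => [a|] [b|] //= ab ba; rewrite (@anti_leq a b) ?ab. Qed.

Lemma ninf_le_total x y : ninf_le x y || ninf_le y x.
Proof. by case: x y => [a|] [b|] //=; apply: leq_total. Qed.

Lemma ninf_leNone x : ninf_le x None.
Proof. by case: x. Qed.

Lemma ninf_Nonele y : ninf_le None y -> y = None.
Proof. by case: y. Qed.

Lemma ninf_le0 x : ninf_le (Some 0%N) x.
Proof. by case: x. Qed.

Lemma ninf_le_min_l x y : ninf_le (ninf_min x y) x.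
Proof.
rewrite /ninf_min; case: ifP => [_|yx]; first exact: ninf_le_refl.
by move: (ninf_le_total x y); rewrite yx.
Qed.

Lemma ninf_le_min_r x y : ninf_le (ninf_min x y) y.
Proof. by rewrite /ninf_min; case: ifP => // _; apply: ninf_le_refl. Qed.

Lemma ninf_le_min x y z : ninf_le z x -> ninf_le z y -> ninf_le z (ninf_min x y).
Proof. by rewrite /ninf_min; case: ifP. Qed.

Lemma ninf_le_max_l x y : ninf_le x (ninf_max x y).
Proof. by rewrite /ninf_max; case: ifP => // _; apply: ninf_le_refl. Qed.

Lemma ninf_le_max_r x y : ninf_le y (ninf_max x y).
Proof.
rewrite /ninf_max; case: ifP => [_|yx]; first exact: ninf_le_refl.
by move: (ninf_le_total x y); rewrite yx.
Qed.

Lemma ninf_max_le x y z : ninf_le x z -> ninf_le y z -> ninf_le (ninf_max x y) z.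
Proof. by rewrite /ninf_max; case: ifP. Qed.

Section BigMinMax.
Variables (I : finType) (X : {set I}) (f : I -> ninf).

Lemma ninf_bigmin_le a : a \in X -> ninf_le (\big[ninf_min/None]_(i in X) f i) (f a).
Proof.
move=> Xa; have : a \in index_enum I by rewrite mem_index_enum.
elim: (index_enum I) => [|b s IHs] //; rewrite in_cons big_cons.
case/orP=> [/eqP <-|a_s]; first by rewrite Xa; apply: ninf_le_min_l.
case: ifP => _; last exact: IHs.
exact: ninf_le_trans (ninf_le_min_r _ _) (IHs a_s).
Qed.

Lemma ninf_le_bigmin x : (forall a, a \in X -> ninf_le x (f a)) ->
  ninf_le x (\big[ninf_min/None]_(i in X) f i).
Proof.
move=> le_x; apply: (big_rec (ninf_le x)); first exact: ninf_leNone.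
by move=> i m Xi le_xm; apply: ninf_le_min => //; apply: le_x.
Qed.

Lemma ninf_bigminP : \big[ninf_min/None]_(i in X) f i = None \/
  exists2 a, a \in X & \big[ninf_min/None]_(i in X) f i = f a.
Proof.
apply: (big_rec (fun m => m = None \/ exists2 a, a \in X & m = f a)); first by left.
by move=> i m Xi IHm; rewrite /ninf_min; case: ifP => _ //; right; exists i.
Qed.

Lemma ninf_bigmin_None a : \big[ninf_min/None]_(i in X) f i = None -> a \in X -> f a = None.
Proof. by move=> m_None /ninf_bigmin_le; rewrite m_None => /ninf_Nonele. Qed.

Lemma ninf_le_bigmax a : a \in X -> ninf_le (f a) (\big[ninf_max/Some 0%N]_(i in X) f i).
Proof.
move=> Xa; have : a \in index_enum I by rewrite mem_index_enum.
elim: (index_enum I) => [|b s IHs] //; rewrite in_cons big_cons.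
case/orP=> [/eqP <-|a_s]; first by rewrite Xa; apply: ninf_le_max_l.
case: ifP => _; last exact: IHs.
exact: ninf_le_trans (IHs a_s) (ninf_le_max_r _ _).
Qed.

Lemma ninf_bigmax_le x : (forall a, a \in X -> ninf_le (f a) x) ->
  ninf_le (\big[ninf_max/Some 0%N]_(i in X) f i) x.
Proof.
move=> le_x; apply: (big_rec (ninf_le^~ x)); first exact: ninf_le0.
by move=> i m Xi le_mx; apply: ninf_max_le => //; apply: le_x.
Qed.

End BigMinMax.

Section LeastFixedPoint.
Variables (S : finType) (F : (S -> ninf) -> S -> ninf).
Hypothesis F_mono : forall r1 r2, (forall s, ninf_le (r1 s) (r2 s)) ->
  forall s, ninf_le (F r1 s) (F r2 s).

Definition prefixed (r : S -> ninf) := forall s, ninf_le (F r s) (r s).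

(* Knaster-Tarski: the pointwise infimum of all prefixed points is a fixed point. *)
Let inf_prefixed (s : S) : ninf :=
  let finite_at n := `[< exists2 r, prefixed r & r s = Some n >] in
  match pselect (exists n, finite_at n) with
  | left ex_n => Some (ex_minn ex_n)
  | right _ => None
  end.

Let inf_prefixed_lb r s : prefixed r -> ninf_le (inf_prefixed s) (r s).
Proof.
move=> r_pre; case rs: (r s) => [n|]; last exact: ninf_leNone.
have fin_n : `[< exists2 r, prefixed r & r s = Some n >] by apply/asboolP; exists r.
rewrite /inf_prefixed; case: pselect => [ex_n|[]]; last by exists n.
by case: ex_minnP => m _ /(_ n fin_n).
Qed.

Let inf_prefixed_glb x s : (forall r, prefixed r -> ninf_le x (r s)) ->
  ninf_le x (inf_prefixed s).
Proof.
move=> x_lb; rewrite /inf_prefixed; case: pselect => [ex_n|_]; last exact: ninf_leNone.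
by case: ex_minnP => m /asboolP[r r_pre <-] _; apply: x_lb.
Qed.

Let inf_prefixed_fix s : F inf_prefixed s = inf_prefixed s.
Proof.
have pre : prefixed inf_prefixed.
  move=> t; apply: inf_prefixed_glb => r r_pre.
  apply: ninf_le_trans (r_pre t); apply: F_mono => u; exact: inf_prefixed_lb.
apply: ninf_le_anti; first exact: pre.
by apply: inf_prefixed_lb => t; apply: F_mono; apply: pre.
Qed.

Lemma lfp_le_prefixed r r' : is_lfp F r -> prefixed r' -> forall s, ninf_le (r s) (r' s).
Proof.
case=> _ r_least r'_pre s.
exact: ninf_le_trans (r_least _ inf_prefixed_fix s) (inf_prefixed_lb s r'_pre).
Qed.

Lemma lfp_lower_not_prefixed r (Z : {set S}) n :
  is_lfp F r -> (forall z, z \in Z -> r z = None) ->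
  let r' s := if s \in Z then Some n else r s in
  (forall z, z \in Z -> ninf_le (F r' z) (Some n)) -> forall z, z \notin Z.
Proof.
move=> r_lfp rZ r' F_Z z; apply/negP => Zz.
have r'_le s : ninf_le (r' s) (r s).
  by rewrite /r'; case: ifP => [/rZ ->|_]; [apply: ninf_leNone|apply: ninf_le_refl].
have r'_pre : prefixed r'.
  move=> s; rewrite {2}/r'; case: ifP => [/F_Z //|_].
  by case: r_lfp => r_fix _; rewrite -r_fix; apply: F_mono.
by have := lfp_le_prefixed r_lfp r'_pre z; rewrite rZ // /r' Zz.
Qed.

End LeastFixedPoint.

Section DistVal.
Variables (I : finType) (X : {set I}).

Definition nonconst (f : I -> ninf) := [exists u in X, exists v in X, f u != f v].

Definition dist_val (f : I -> ninf) : ninf :=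
  ninf_addb (\big[ninf_min/None]_(i in X) f i) (nonconst f).

Lemma nonconstPn f x : ~~ nonconst f -> x \in X -> {in X, forall y, f y = f x}.
Proof.
move=> /existsPn cst Xx y Xy; apply/eqP.
by move/(_ y): cst; rewrite Xy => /existsPn/(_ x); rewrite Xx negbK.
Qed.

Lemma dist_val_cst f c x : x \in X -> {in X, forall y, f y = c} -> dist_val f = c.
Proof.
move=> Xx f_c; have min_c : \big[ninf_min/None]_(i in X) f i = c.
  apply: ninf_le_anti; first by rewrite -(f_c x Xx); apply: ninf_bigmin_le.
  by apply: ninf_le_bigmin => y Xy; rewrite f_c //; apply: ninf_le_refl.
rewrite /dist_val min_c; suff /negbTE -> : ~~ nonconst f by [].
by apply/negP => /existsP[u /andP[Xu /existsP[v /andP[Xv]]]]; rewrite !f_c // eqxx.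
Qed.

Lemma dist_val_le_succ f x n : x \in X -> f x = Some n ->
  ninf_le (dist_val f) (Some n.+1).
Proof.
move=> Xx fx; have := ninf_bigmin_le f Xx; rewrite fx /dist_val.
case: (\big[_/_]_(i in X) f i) => [m|] //=; by case: nonconst => /= mn; [rewrite ltnS|apply: leqW].
Qed.

Lemma dist_val_None f y : dist_val f = None -> y \in X -> f y = None.
Proof.
rewrite /dist_val; case E: (\big[_/_]_(i in X) f i) => [m|]; first by case: nonconst.
by move=> _; apply: ninf_bigmin_None E.
Qed.

Lemma dist_val_le_Some f k : ninf_le (dist_val f) (Some k) ->
  exists x j, [/\ x \in X, f x = Some j, (j <= k)%N &
                  (j < k)%N \/ {in X, forall y, f y = Some j}].
Proof.
rewrite /dist_val; case: (ninf_bigminP X f) => [->|[x Xx ->]]; first by case: nonconst.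
case fx: (f x) => [j|] /=; last by case: nonconst.
case: (boolP (nonconst f)) => [_|/nonconstPn cst] /= le_jk; exists x, j.
  by split=> //; [apply: ltnW | left].
by split=> //; right=> y Xy; rewrite (cst x).
Qed.

Lemma dist_val_mono f g : {in X, forall i, ninf_le (f i) (g i)} ->
  ninf_le (dist_val f) (dist_val g).
Proof.
move=> le_fg; have le_min : ninf_le (\big[ninf_min/None]_(i in X) f i)
                                    (\big[ninf_min/None]_(i in X) g i).
  apply: ninf_le_bigmin => i Xi.
  exact: ninf_le_trans (ninf_bigmin_le f Xi) (le_fg i Xi).
rewrite /dist_val; case: (ninf_bigminP X g) le_min => [->|[x Xx ->]] le_min.
  by case: (nonconst g); apply: ninf_leNone.
case gx: (g x) le_min => [m|] le_min; last by case: (nonconst g); apply: ninf_leNone.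
case: (ninf_bigminP X f) le_min => [->//|[y Xy mf_y]]; rewrite mf_y.
case fy: (f y) => [n|] //= le_nm.
case: (boolP (nonconst f)) => [ncf|_]; case: (boolP (nonconst g)) => [_|cg] /=;
  rewrite ?ltnS ?(leq_trans le_nm) //.
(* [g] is constant equal to [m]; were [n = m], [f] would be squeezed to [m] too. *)
rewrite ltn_neqAle le_nm andbT; apply: contraL ncf => /eqP nm.
have f_m w : w \in X -> f w = Some m.
  move=> Xw; apply: ninf_le_anti; first by rewrite -gx -(nonconstPn cg Xx Xw); apply: le_fg.
  by rewrite -nm -fy -mf_y; apply: ninf_bigmin_le.
by apply/negP => /existsP[u /andP[Xu /existsP[v /andP[Xv]]]]; rewrite !f_m // eqxx.
Qed.

End DistVal.

Section Operator.
Variables (R : realType) (S Act : finType) (P : S -> Act -> S -> R).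

Lemma DtildeE o T r s : Dtilde P o T r s = if s \in T then None else
  match o with
  | Omin => \big[ninf_min/None]_(a in enabled P s) dist_val (Post P s a) r
  | Omax => \big[ninf_max/Some 0%N]_(a in enabled P s) dist_val (Post P s a) r
  end.
Proof. by []. Qed.

Lemma Dtilde_mono o T r1 r2 : (forall s, ninf_le (r1 s) (r2 s)) ->
  forall s, ninf_le (Dtilde P o T r1 s) (Dtilde P o T r2 s).
Proof.
move=> le_r s; rewrite !DtildeE; case: (s \in T) => //.
have le_val a : ninf_le (dist_val (Post P s a) r1) (dist_val (Post P s a) r2).
  by apply: dist_val_mono => t _; apply: le_r.
case: o.
  apply: ninf_le_bigmin => a Ea.
  exact: ninf_le_trans (ninf_bigmin_le _ Ea) (le_val a).
apply: ninf_bigmax_le => a Ea.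
exact: ninf_le_trans (le_val a) (ninf_le_bigmax _ Ea).
Qed.

End Operator.

Section Averages.
Variables (R : realDomainType) (I : finType) (p x : I -> R).
Hypotheses (p_ge0 : forall i, 0 <= p i) (p_sum1 : \sum_i p i = 1).
Variable b : R.
Hypothesis x_le : forall i, 0 < p i -> x i <= b.

Let mulr_le i : p i * x i <= p i * b.
Proof.
have [->|p_neq0] := eqVneq (p i) 0; first by rewrite !mul0r.
by rewrite ler_wpM2l // x_le // lt_def p_neq0 p_ge0.
Qed.

Lemma avg_le : \sum_i p i * x i <= b.
Proof.
rewrite -[leRHS]mul1r -p_sum1 mulr_suml.
by apply: ler_sum => i _; apply: mulr_le.
Qed.

Lemma avg_le_sub c i0 : x i0 <= c -> \sum_i p i * x i <= b - p i0 * (b - c).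
Proof.
move=> x_i0; have rest : \sum_(i | i != i0) p i * x i <= (1 - p i0) * b.
  rewrite -p_sum1 [in leRHS](bigD1 i0) //= addrAC subrr add0r mulr_suml.
  by apply: ler_sum => i _; apply: mulr_le.
rewrite (bigD1 i0) //=; have := ler_wpM2l (p_ge0 i0) x_i0; lra.
Qed.

End Averages.

Lemma bernoulli_onem (R : realDomainType) (d : R) k : 0 <= d <= 1 ->
  (1 - d) ^+ k * (1 + k%:R * d) <= 1.
Proof.
case/andP=> d_ge0 d_le1; elim: k => [|k IHk]; first by rewrite expr0 mul0r addr0 mulr1.
have pow_ge0 : 0 <= (1 - d) ^+ k by apply: exprn_ge0; lra.
have step : (1 - d) * (1 + k.+1%:R * d) <= 1 + k%:R * d.
  have : 0 <= k%:R :> R := ler0n _ _; rewrite -addn1 natrD; nra.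
rewrite exprSr -mulrA; apply: le_trans IHk; exact: ler_wpM2l.
Qed.

Lemma le_expr_le0 (R : archiRealFieldType) (x y : R) : 0 <= y < 1 ->
  (forall k, x <= y ^+ k) -> x <= 0.
Proof.
case/andP=> y_ge0 y_lt1 x_le; rewrite leNgt; apply/negP => x_gt0.
have xd_gt0 : 0 < x * (1 - y) by rewrite mulr_gt0 // subr_gt0.
have inv_ge0 : 0 <= (x * (1 - y))^-1 by rewrite invr_ge0 ltW.
have := archi_boundP inv_ge0; set k := Num.bound _ => k_big.
have bern : y ^+ k * (1 + k%:R * (1 - y)) <= 1.
  by have := @bernoulli_onem _ (1 - y) k; rewrite subKr; apply; lra.
have kd_ge0 : 0 <= k%:R * (1 - y) by rewrite mulr_ge0 ?ler0n // subr_ge0 ltW.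
have : x * (1 + k%:R * (1 - y)) <= 1.
  by apply: le_trans bern; rewrite ler_wpM2r // ?x_le //; lra.
move: k_big; rewrite -div1r ltr_pdivrMr //; nra.
Qed.

Section MarkovDecisionProcess.
Variables (R : realType) (S Act : finType) (P : S -> Act -> S -> R).
Hypothesis P_MDP : is_MDP P.

Lemma P_ge0 s a s' : 0 <= P s a s'.
Proof. by case: P_MDP => P01 _ _; case/andP: (P01 s a s'). Qed.

Lemma P_le1 s a s' : P s a s' <= 1.
Proof. by case: P_MDP => P01 _ _; case/andP: (P01 s a s'). Qed.

Lemma sum_P_enabled s a : a \in enabled P s -> \sum_s' P s a s' = 1.
Proof. by rewrite inE => /eqP. Qed.

Lemma Post_nonempty s a : a \in enabled P s -> exists s', s' \in Post P s a.
Proof.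
move=> Ea; apply/existsP; apply: contraT => /existsPn Post0.
suff : \sum_s' P s a s' == 0 by rewrite sum_P_enabled // oner_eq0.
apply/eqP/big1 => s' _; apply/eqP; rewrite eq_le P_ge0 andbT.
by move: (Post0 s'); rewrite inE -leNgt.
Qed.

Lemma enabled_nonempty s : exists a, a \in enabled P s.
Proof. by case: P_MDP. Qed.

Lemma strategy_exists : exists sigma, strategy P sigma.
Proof. by have /choice[sigma] := enabled_nonempty; exists sigma. Qed.

Lemma strategy_choice (Q : S -> Act -> Prop) :
  (forall s, exists2 a, a \in enabled P s & Q s a) ->
  exists2 sigma, strategy P sigma & forall s, Q s (sigma s).
Proof.
move=> exQ; have /choice[sigma sigmaP] : forall s, exists a, a \in enabled P s /\ Q s a.
  by move=> s; have [a Ea Qa] := exQ s; exists a.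
by exists sigma => s; case: (sigmaP s).
Qed.

(* Product of all positive transition probabilities: a positive lower bound
   on each of them. *)
Definition prob_lb : R :=
  \prod_(x : S * Act * S | 0 < P x.1.1 x.1.2 x.2) P x.1.1 x.1.2 x.2.

Lemma prob_lb_gt0 : 0 < prob_lb.
Proof. by apply: prodr_gt0 => x. Qed.

Lemma prob_lb_le1 : prob_lb <= 1.
Proof. by apply: prodr_ile1 => x _; rewrite P_ge0 P_le1. Qed.

Lemma prob_lb_le s a s' : 0 < P s a s' -> prob_lb <= P s a s'.
Proof.
move=> P_gt0; rewrite /prob_lb (bigD1 (s, a, s')) //= -[leRHS]mulr1.
by rewrite ler_wpM2l ?P_ge0 // prodr_ile1 // => x _; rewrite P_ge0 P_le1.
Qed.

Lemma prob_lbX_01 k : 0 <= prob_lb ^+ k <= 1.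
Proof. by rewrite exprn_ge0 ?exprn_ile1 // ?prob_lb_le1 // ltW // prob_lb_gt0. Qed.

Variable T : {set S}.

Section Strategy.
Variables (sigma : S -> Act) (sigma_strat : strategy P sigma).
Local Notation reach := (reach_within P T sigma).

Lemma reach_T n s : s \in T -> reach n s = 1.
Proof. by case: n => [|n] /= ->. Qed.

Lemma reach_S n s : s \notin T ->
  reach n.+1 s = \sum_s' P s (sigma s) s' * reach n s'.
Proof. by move=> /negbTE /= ->. Qed.

Lemma reach_01 n s : 0 <= reach n s <= 1.
Proof.
elim: n s => [|n IHn] s; first by rewrite /=; case: (s \in T); rewrite ?ler01 ?lexx.
have [sT|sNT] := boolP (s \in T); first by rewrite reach_T // ler01 lexx.
rewrite reach_S // sumr_ge0 => [|s' _]; last by rewrite mulr_ge0 ?P_ge0 //; case/andP: (IHn s').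
by apply: avg_le => [s'||s' _]; rewrite ?P_ge0 ?sum_P_enabled //; case/andP: (IHn s').
Qed.

Lemma reach_ge0 n s : 0 <= reach n s. Proof. by case/andP: (reach_01 n s). Qed.
Lemma reach_le1 n s : reach n s <= 1. Proof. by case/andP: (reach_01 n s). Qed.

Lemma reach_leS n s : reach n s <= reach n.+1 s.
Proof.
have [sT|sNT] := boolP (s \in T); first by rewrite !reach_T.
elim: n s sNT => [|n IHn] s sNT; rewrite reach_S //.
  have -> : reach 0 s = 0 by rewrite /= (negbTE sNT).
  by apply: sumr_ge0 => s' _; rewrite mulr_ge0 ?P_ge0 ?reach_ge0.
rewrite reach_S //; apply: ler_sum => s' _; rewrite ler_wpM2l ?P_ge0 //.
by have [s'T|s'NT] := boolP (s' \in T); [rewrite !reach_T|apply: IHn].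
Qed.

Lemma reach_mono s : {homo reach^~ s : n m / (n <= m)%N >-> n <= m}.
Proof. by apply: homo_leq => [x|y x z|n]; [apply: lexx|apply: le_trans|apply: reach_leS]. Qed.

Lemma le_Pr_reach n s : reach n s <= Pr_reach P T sigma s.
Proof. by apply: ub_le_sup; [exists 1 => _ [m _ <-]; apply: reach_le1|exists n]. Qed.

Lemma Pr_reach_le c s : (forall n, reach n s <= c) -> Pr_reach P T sigma s <= c.
Proof. by move=> le_c; apply: ge_sup; [exists (reach 0 s), 0%N|move=> _ [n _ <-]]. Qed.

Lemma Pr_reach_ge0 s : 0 <= Pr_reach P T sigma s.
Proof. exact: le_trans (reach_ge0 0 s) (le_Pr_reach 0 s). Qed.

Lemma Pr_reach_le1 s : Pr_reach P T sigma s <= 1.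
Proof. by apply: Pr_reach_le => n; apply: reach_le1. Qed.

End Strategy.

Lemma Pr_opt_min_le sigma s : strategy P sigma ->
  Pr_opt P Omin T s <= Pr_reach P T sigma s.
Proof.
move=> sigma_strat; apply: ge_inf; last by exists sigma.
by exists 0 => _ [tau tau_strat <-]; apply: Pr_reach_ge0.
Qed.

Lemma Pr_opt_min_ge c s :
  (forall sigma, strategy P sigma -> c <= Pr_reach P T sigma s) -> c <= Pr_opt P Omin T s.
Proof.
have [sigma sigma_strat] := strategy_exists.
move=> c_le; apply: lb_le_inf; first by exists (Pr_reach P T sigma s), sigma.
by move=> _ [tau tau_strat <-]; apply: c_le.
Qed.

Lemma Pr_opt_max_ge sigma s : strategy P sigma ->
  Pr_reach P T sigma s <= Pr_opt P Omax T s.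
Proof.
move=> sigma_strat; apply: ub_le_sup; last by exists sigma.
by exists 1 => _ [tau tau_strat <-]; apply: Pr_reach_le1.
Qed.

Lemma Pr_opt_max_le c s :
  (forall sigma, strategy P sigma -> Pr_reach P T sigma s <= c) -> Pr_opt P Omax T s <= c.
Proof.
move=> le_c; apply: ge_sup; last by move=> _ [tau tau_strat <-]; apply: le_c.
have [sigma sigma_strat] := strategy_exists.
by exists (Pr_reach P T sigma s), sigma.
Qed.

End MarkovDecisionProcess.

Section FiniteDistance.
Variables (R : realType) (S Act : finType) (P : S -> Act -> S -> R).
Hypothesis P_MDP : is_MDP P.
Variables (T : {set S}) (sigma : S -> Act) (r : S -> ninf).
Hypotheses (sigma_strat : strategy P sigma) (r_T : forall s, s \in T -> r s = None).
Hypothesis r_sigma : forall s, s \notin T -> ninf_le (dist_val (Post P s (sigma s)) r) (r s).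
Local Notation q := (prob_lb P).

Lemma reach_le_dist n s k : r s = Some k -> reach_within P T sigma n s <= 1 - q ^+ k.
Proof.
have q_01 := prob_lbX_01 P_MDP.
elim: n s k => [|n IHn] s k rs; have sNT : s \notin T by apply/negP => /r_T; rewrite rs.
  by rewrite /= (negbTE sNT) subr_ge0; case/andP: (q_01 k).
have le_qX j : (j <= k)%N -> q ^+ k <= q ^+ j.
  by move=> le_jk; rewrite ler_wiXn2l // ?prob_lb_le1 // ltW // prob_lb_gt0.
have sum1 := sum_P_enabled (sigma_strat s).
rewrite reach_S //; have := r_sigma sNT; rewrite rs.
case/dist_val_le_Some => [x [j [Px rx le_jk [lt_jk|cst]]]].
  (* the step to [x], of smaller distance, has probability at least [q] *)
  apply: le_trans (avg_le_sub (P_ge0 P_MDP s (sigma s)) sum1 _ (IHn x j rx)) _.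
    by move=> s' _; apply: reach_le1.
  have q_le : q <= P s (sigma s) x by apply: prob_lb_le; rewrite inE in Px.
  have := le_qX _ lt_jk; have := q_01 j; rewrite exprS; nra.
apply: le_trans (avg_le (P_ge0 P_MDP s (sigma s)) sum1 _) _.
  by move=> s' Ps'; apply: IHn; apply: cst; rewrite inE.
by rewrite lerD2l lerN2 le_qX.
Qed.

Lemma Pr_reach_le_dist s k : r s = Some k -> Pr_reach P T sigma s <= 1 - q ^+ k.
Proof. by move=> rs; apply: Pr_reach_le => n; apply: reach_le_dist. Qed.

End FiniteDistance.

Section AlmostSureReachability.
Variables (R : realType) (S Act : finType) (P : S -> Act -> S -> R).
Hypothesis P_MDP : is_MDP P.
Variables (T : {set S}) (sigma : S -> Act) (A : {set S}) (rho : S -> nat) (N : nat).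
Hypothesis sigma_strat : strategy P sigma.
Hypothesis A_closed : forall s s', s \in A -> s \notin T -> s' \in Post P s (sigma s) -> s' \in A.
Hypothesis rho_dec : forall s, s \in A -> s \notin T ->
  exists2 s', s' \in Post P s (sigma s) & (rho s' < rho s)%N.
Hypothesis rho_le : forall s, s \in A -> (rho s <= N)%N.
Local Notation q := (prob_lb P).
Local Notation reach := (reach_within P T sigma).

Lemma miss_decay_step n b j s : (forall t, t \in A -> 1 - reach n t <= b) ->
  s \in A -> (rho s <= j)%N -> 1 - reach (n + j) s <= (1 - q ^+ j) * b.
Proof.
move=> miss_b; have q_01 := prob_lbX_01 P_MDP.
elim: j s => [|j IHj] s sA rho_j.
  have [sT|sNT] := boolP (s \in T); first by rewrite reach_T // expr0 !subrr mul0r.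
  by have [s' _] := rho_dec sA sNT; rewrite ltnNge (leq_trans rho_j).
have b_ge0 : 0 <= b by apply: le_trans (miss_b s sA); rewrite subr_ge0 reach_le1.
have [sT|sNT] := boolP (s \in T).
  by rewrite reach_T // subrr mulr_ge0 // subr_ge0; case/andP: (q_01 j.+1).
have [s1 Ps1 rho_s1] := rho_dec sA sNT.
have sum1 := sum_P_enabled (sigma_strat s).
have -> : 1 - reach (n + j.+1) s = \sum_s' P s (sigma s) s' * (1 - reach (n + j) s').
  rewrite addnS reach_S // -[in LHS]sum1 -sumrB.
  by apply: eq_bigr => s' _; rewrite mulrBr mulr1.
apply: le_trans (avg_le_sub (P_ge0 P_MDP s (sigma s)) sum1 _ (IHj s1 _ _)) _.
- move=> s' Ps'; apply: le_trans (miss_b s' _); last by apply: (A_closed sA sNT); rewrite inE.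
  by rewrite lerD2l lerN2 reach_mono ?leq_addr.
- exact: A_closed sA sNT Ps1.
- by rewrite -ltnS (leq_trans rho_s1).
have q_le : q <= P s (sigma s) s1 by apply: prob_lb_le; rewrite inE in Ps1.
have : 0 <= q ^+ j * b by rewrite mulr_ge0 // exprn_ge0 // ltW // prob_lb_gt0.
rewrite exprS; nra.
Qed.

Lemma miss_decay k s : s \in A -> 1 - reach (k * N) s <= (1 - q ^+ N) ^+ k.
Proof.
elim: k s => [|k IHk] s sA; first by rewrite mul0n expr0 lerBlDr lerDl reach_ge0.
by rewrite mulSn addnC exprS; apply: miss_decay_step => //; apply: rho_le.
Qed.

Lemma Pr_reach_eq1 s : s \in A -> Pr_reach P T sigma s = 1.
Proof.
move=> sA; apply/eqP; rewrite eq_le Pr_reach_le1 //= -subr_le0.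
apply: (@le_expr_le0 _ _ (1 - q ^+ N)) => [|k].
  have := prob_lbX_01 P_MDP N; have : 0 < q ^+ N by rewrite exprn_gt0 // prob_lb_gt0.
  lra.
apply: le_trans (miss_decay k sA); rewrite lerD2l lerN2; exact: le_Pr_reach.
Qed.

End AlmostSureReachability.

Section Attractor.
Variables (S : finType) (e : rel S) (T : {set S}).

Definition attr_step (X : {set S}) : {set S} :=
  T :|: [set s | [exists s', e s s' && (s' \in X)]].

Lemma attr_step_mono : {homo attr_step : X Y / X \subset Y}.
Proof.
move=> X Y /fintype.subsetP XY; apply/fintype.subsetP => s; rewrite !inE.
case/orP=> [->//|/existsP[s' /andP[ess' Xs']]]; apply/orP; right.
by apply/existsP; exists s'; rewrite ess' XY.
Qed.

Definition attractor := fixset attr_step.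
Definition attr_rank := fix_order attr_step.

Lemma attractorT s : s \in T -> s \in attractor.
Proof. by move=> sT; rewrite /attractor -(fixsetK attr_step_mono) inE sT. Qed.

Lemma attractor_pre s s' : e s s' -> s' \in attractor -> s \in attractor.
Proof.
move=> ess' s'_attr; rewrite /attractor -(fixsetK attr_step_mono) !inE.
by apply/orP; right; apply/existsP; exists s'; rewrite ess'.
Qed.

Lemma attr_rank_le_card s : (attr_rank s <= #|S|)%N.
Proof. exact: fix_order_le_max. Qed.

Lemma attr_rank_dec s : s \in attractor -> s \notin T ->
  exists s', [/\ e s s', s' \in attractor & (attr_rank s' < attr_rank s)%N].
Proof.
move=> s_attr sNT; have := in_iter attr_step_mono s_attr (leqnn (attr_rank s)).
have : (0 < attr_rank s)%N by rewrite fix_order_gt0.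
case: (attr_rank s) => // k _ /=; rewrite !inE (negbTE sNT) => /existsP[s' /andP[ess' s'_k]].
exists s'; split => //; first exact: fintype.subsetP (iter_sub_fix attr_step_mono k) s' s'_k.
by rewrite ltnS; exact: (fix_order_small attr_step_mono s'_k).
Qed.

End Attractor.

Section LeastFixedPointDistance.
Variables (R : realType) (S Act : finType) (P : S -> Act -> S -> R).
Hypothesis P_MDP : is_MDP P.
Variables (T : {set S}) (o : opt_kind) (r : S -> ninf).
Hypothesis r_lfp : is_lfp (Dtilde P o T) r.

Lemma r_fix s : Dtilde P o T r s = r s.
Proof. by case: r_lfp. Qed.

Lemma r_T s : s \in T -> r s = None.
Proof. by move=> sT; rewrite -r_fix DtildeE sT. Qed.

Definition r_inf := [set s | r s == None].

Lemma r_infP s : reflect (r s = None) (s \in r_inf).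
Proof. by rewrite inE; apply: eqP. Qed.

Let r_bound := (\max_s odflt 0%N (r s)).+1.

Let lower_on (Z : {set S}) s := if s \in Z then Some r_bound else r s.

Lemma dist_val_lower_fin (Z : {set S}) s a s' :
  s' \in Post P s a -> s' \notin r_inf -> s' \notin Z ->
  ninf_le (dist_val (Post P s a) (lower_on Z)) (Some r_bound).
Proof.
move=> Ps' s'_fin s'NZ; case rs': (r s') s'_fin => [k|]; last by rewrite inE rs'.
move=> _; apply: ninf_le_trans (dist_val_le_succ Ps' _) _.
  by rewrite /lower_on (negbTE s'NZ) rs'.
by rewrite /= ltnS; have := @leq_bigmax _ (fun s => odflt 0%N (r s)) s'; rewrite rs'.
Qed.

Lemma dist_val_lower_in (Z : {set S}) s a : a \in enabled P s -> Post P s a \subset Z ->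
  dist_val (Post P s a) (lower_on Z) = Some r_bound.
Proof.
move=> Ea /fintype.subsetP PZ; have [s' Ps'] := Post_nonempty P_MDP Ea.
by apply: dist_val_cst Ps' _ => t /PZ Zt; rewrite /lower_on Zt.
Qed.

Lemma r_inf_sub_attractor (e : rel S) :
  (forall z, z \in r_inf :\: attractor e T ->
     ninf_le (Dtilde P o T (lower_on (r_inf :\: attractor e T)) z) (Some r_bound)) ->
  r_inf \subset attractor e T.
Proof.
move=> lower_pre; apply/fintype.subsetP => s s_inf; apply: contraT => sN.
have := lfp_lower_not_prefixed (@Dtilde_mono _ _ _ P o T) r_lfp _ lower_pre s.
by rewrite inE sN s_inf; apply => z /setDP[/r_infP].
Qed.

Section MinCase.
Hypothesis o_min : o = Omin.

Lemma r_inf_closed s a s' : s \in r_inf -> s \notin T -> a \in enabled P s ->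
  s' \in Post P s a -> s' \in r_inf.
Proof.
move=> /r_infP rs sNT Ea Ps'; apply/r_infP; move: rs.
rewrite -r_fix DtildeE (negbTE sNT) o_min => /ninf_bigmin_None/(_ Ea) /dist_val_None.
exact.
Qed.

Lemma Pr_reach_inf_min sigma s : strategy P sigma -> s \in r_inf ->
  Pr_reach P T sigma s = 1.
Proof.
move=> sigma_strat; pose e := [rel t t' | (t \in r_inf) && (t' \in Post P t (sigma t))].
have inf_attr : r_inf \subset attractor e T.
  apply: r_inf_sub_attractor => z /setDP[z_inf zN].
  have zNT : z \notin T by apply: contra zN; apply: attractorT.
  rewrite DtildeE (negbTE zNT) o_min.
  apply: ninf_le_trans (ninf_bigmin_le _ (sigma_strat z)) _.
  rewrite dist_val_lower_in ?ninf_le_refl //; apply/fintype.subsetP => s' Ps'.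
  rewrite inE (r_inf_closed z_inf zNT (sigma_strat z) Ps') andbT.
  by apply: contra zN; apply: attractor_pre; rewrite /= z_inf.
apply: (Pr_reach_eq1 P_MDP sigma_strat (A := r_inf) (rho := attr_rank e T))
  => [t t' t_inf tNT|t t_inf tNT|t _].
- exact: r_inf_closed (sigma_strat t).
- have [t' [/andP[_ Pt'] _ lt_rank]] := attr_rank_dec (fintype.subsetP inf_attr t t_inf) tNT.
  by exists t'.
- exact: attr_rank_le_card.
Qed.

Lemma Pr_opt_min_inf s : s \in r_inf -> Pr_opt P Omin T s = 1.
Proof.
move=> s_inf; have [sigma sigma_strat] := strategy_exists P_MDP.
apply/eqP; rewrite eq_le; apply/andP; split.
  by rewrite -(Pr_reach_inf_min sigma_strat s_inf) Pr_opt_min_le.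
by apply: Pr_opt_min_ge => // tau tau_strat; rewrite Pr_reach_inf_min.
Qed.

Lemma strategy_realizing_r : exists2 sigma, strategy P sigma &
  forall t, t \notin T -> ninf_le (dist_val (Post P t (sigma t)) r) (r t).
Proof.
apply: (strategy_choice (Q := fun t a =>
  t \notin T -> ninf_le (dist_val (Post P t a) r) (r t))) => t.
have [a Ea] := enabled_nonempty P_MDP t; have [tT|tNT] := boolP (t \in T); first by exists a.
have := r_fix t; rewrite DtildeE (negbTE tNT) o_min.
case: (ninf_bigminP (enabled P t) (fun b => dist_val (Post P t b) r)) => [-> <-|[b Eb -> <-]].
  by exists a => // _; apply: ninf_leNone.
by exists b => // _; apply: ninf_le_refl.
Qed.

Lemma Pr_opt_min_fin s k : r s = Some k -> Pr_opt P Omin T s < 1.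
Proof.
move=> rs; have [sigma sigma_strat r_sigma] := strategy_realizing_r.
apply: le_lt_trans (Pr_opt_min_le P_MDP T s sigma_strat) _.
apply: le_lt_trans (Pr_reach_le_dist P_MDP sigma_strat r_T r_sigma rs) _.
by rewrite ltrBlDr ltrDl exprn_gt0 // prob_lb_gt0.
Qed.

End MinCase.

Section MaxCase.
Hypothesis o_max : o = Omax.

Let e := [rel t t' | (t \in r_inf) &&
  [exists a in enabled P t, (Post P t a \subset r_inf) && (t' \in Post P t a)]].

Lemma r_inf_sub_attractor_max : r_inf \subset attractor e T.
Proof.
apply: r_inf_sub_attractor => z /setDP[z_inf zN].
have zNT : z \notin T by apply: contra zN; apply: attractorT.
rewrite DtildeE (negbTE zNT) o_max; apply: ninf_bigmax_le => a Ea.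
case: (boolP (Post P z a \subset r_inf)) => [Post_inf|/fintype.subsetPn[s' Ps' s'_fin]].
  rewrite dist_val_lower_in ?ninf_le_refl //; apply/fintype.subsetP => s' Ps'.
  rewrite inE (fintype.subsetP Post_inf s' Ps') andbT.
  apply: contra zN; apply: attractor_pre; rewrite /= z_inf.
  by apply/existsP; exists a; rewrite Ea Post_inf Ps'.
by apply: (dist_val_lower_fin Ps' s'_fin); rewrite inE (negbTE s'_fin) andbF.
Qed.

Lemma strategy_to_attractor : exists2 sigma, strategy P sigma &
  forall s, s \in r_inf -> Pr_reach P T sigma s = 1.
Proof.
have /strategy_choice[sigma sigma_strat sigma_dec] : forall t,
    exists2 a, a \in enabled P t & t \in r_inf -> t \notin T ->
      Post P t a \subset r_inf /\
      exists2 t', t' \in Post P t a & (attr_rank e T t' < attr_rank e T t)%N.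
  move=> t; have [a Ea] := enabled_nonempty P_MDP t.
  have [t_inf|] := boolP (t \in r_inf); last by exists a.
  have [tT|tNT] := boolP (t \in T); first by exists a.
  have t_attr := fintype.subsetP r_inf_sub_attractor_max t t_inf.
  have [t' [/andP[_ /existsP[b /and3P[Eb Post_inf Pt']]] _ lt_rank]] :=
    attr_rank_dec t_attr tNT.
  by exists b => // _ _; split => //; exists t'.
exists sigma => // s.
apply: (Pr_reach_eq1 P_MDP sigma_strat (rho := attr_rank e T) (N := #|S|))
  => [t t' t_inf tNT|t t_inf tNT|t _].
- by apply/fintype.subsetP; case: (sigma_dec t t_inf tNT).
- by case: (sigma_dec t t_inf tNT).
- exact: attr_rank_le_card.
Qed.

Lemma Pr_opt_max_inf s : s \in r_inf -> Pr_opt P Omax T s = 1.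
Proof.
move=> s_inf; have [sigma sigma_strat Pr1] := strategy_to_attractor.
apply/eqP; rewrite eq_le; apply/andP; split.
  by apply: (Pr_opt_max_le P_MDP) => tau tau_strat; apply: Pr_reach_le1.
by rewrite -(Pr1 s s_inf) Pr_opt_max_ge.
Qed.

Lemma Pr_opt_max_fin s k : r s = Some k -> Pr_opt P Omax T s < 1.
Proof.
move=> rs; apply: le_lt_trans (_ : 1 - prob_lb P ^+ k < 1); last first.
  by rewrite ltrBlDr ltrDl exprn_gt0 // prob_lb_gt0.
apply: Pr_opt_max_le => // sigma sigma_strat.
apply: (Pr_reach_le_dist P_MDP sigma_strat r_T _ rs) => t tNT.
rewrite -r_fix DtildeE (negbTE tNT) o_max; exact: ninf_le_bigmax.
Qed.

End MaxCase.
End LeastFixedPointDistance.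

Theorem lemma3 (R : realType) (S Act : finType) (P : S -> Act -> S -> R)
    (T : {set S}) (o : opt_kind) (r : S -> ninf) :
  is_MDP P ->
  is_lfp (Dtilde P o T) r ->
  forall s : S, r s = None <-> Pr_opt P o T s = 1.
Proof.
move=> P_MDP r_lfp s; split => [/r_infP s_inf|].
  case: o r_lfp => r_lfp.
    exact: (Pr_opt_min_inf P_MDP r_lfp (erefl Omin) s_inf).
  exact: (Pr_opt_max_inf P_MDP r_lfp (erefl Omax) s_inf).
case rs: (r s) => [k|] // Pr1; suff : Pr_opt P o T s < 1 by rewrite Pr1 ltxx.
case: o r_lfp {Pr1} => r_lfp.
  exact: (Pr_opt_min_fin P_MDP r_lfp (erefl Omin) rs).
exact: (Pr_opt_max_fin P_MDP r_lfp (erefl Omax) rs).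
Qed.
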